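(* Assume $\ell=d$ and that $B_1,B_2,R_1,R_2$ (and $B_1+\bar B_1,B_2+\bar B_2,R_1+\bar R_1,R_2+\bar R_2$) are invertible. Let $P^c\in\mathcal S^d$ be a solution to $0=\mathcal M(P^c)-\mathcal L(P^c)\mathcal N(P^c)^{-1}\mathcal L(P^c)^\top$. If $P^c$ and $(P^c)^{-1}+\gamma B_1R_1^{-1}B_1^\top-\gamma B_2R_2^{-1}B_2^\top$ are invertible, then $$\mathcal M(P^c)-\mathcal L(P^c)\mathcal N(P^c)^{-1}\mathcal L(P^c)^\top=Q-P^c+A^\top\Big(\frac1\gamma(P^c)^{-1}+B_1R_1^{-1}B_1^\top-B_2R_2^{-1}B_2^\top\Big)^{-1}A.$$
   Context: $\mathcal S^d$: symmetric $d\times d$ matrices. Fix $d\ge1$, $\gamma\in(0,1)$, $A,\bar A\in\mathbb R^{d\times d}$, $B_1,\bar B_1,B_2,\bar B_2\in\mathbb R^{d\times d}$, $Q\in\mathcal S^d$, symmetric $R_1,\bar R_1,R_2,\bar R_2\in\mathbb R^{d\times d}$. For $P\in\mathcal S^d$: $\mathcal M(P)=\gamma A^\top PA-P+Q$, $\mathcal L_i(P)=\gamma A^\top PB_i$, $\mathcal L_{12}(P)=\gamma B_1^\top PB_2$, $\mathcal N_1(P)=\gamma B_1^\top PB_1+R_1$, $\mathcal N_2(P)=\gamma B_2^\top PB_2-R_2$, $\mathcal L(P)=[\mathcal L_1(P),\mathcal L_2(P)]$, $\mathcal N(P)=\begin{bmatrix}\mathcal N_1(P)&\mathcal L_{12}(P)\\\mathcal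 L_{12}(P)^\top&\mathcal N_2(P)\end{bmatrix}$ (a solution of the equation is required to have $\mathcal N(P^c)$ invertible). *)

From HB Require Import structures.
From mathcomp Require Import all_boot all_order all_algebra.
Set Implicit Arguments. Unset Strict Implicit. Unset Printing Implicit Defensive.
Import Order.TTheory GRing.Theory Num.Theory.
Local Open Scope ring_scope.

Section Ops.
Variables (R : realFieldType) (d : nat) (gamma : R).
Variables (A B1 B2 Q R1 R2 : 'M[R]_d).

Definition Mop (P : 'M[R]_d) : 'M[R]_d := gamma *: (A^T *m P *m A) - P + Q.
Definition L1op (P : 'M[R]_d) : 'M[R]_d := gamma *: (A^T *m P *m B1).
Definition L2op (P : 'M[R]_d) : 'M[R]_d := gamma *: (A^T *m P *m B2).
Definition L12op (P : 'M[R]_d) : 'M[R]_d := gamma *: (B1^T *m P *m B2).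
Definition N1op (P : 'M[R]_d) : 'M[R]_d := gamma *: (B1^T *m P *m B1) + R1.
Definition N2op (P : 'M[R]_d) : 'M[R]_d := gamma *: (B2^T *m P *m B2) - R2.
Definition Lop (P : 'M[R]_d) : 'M[R]_(d, d + d) := row_mx (L1op P) (L2op P).
Definition Nop (P : 'M[R]_d) : 'M[R]_(d + d) :=
  block_mx (N1op P) (L12op P) (L12op P)^T (N2op P).
Definition Ric (P : 'M[R]_d) : 'M[R]_d :=
  Mop P - Lop P *m invmx (Nop P) *m (Lop P)^T.
End Ops.

From HB Require Import structures.
From mathcomp Require Import all_boot all_order all_algebra.
Import Order.TTheory GRing.Theory Num.Theory.
Set Implicit Arguments. Unset Strict Implicit. Unset Printing Implicit Defensive.
Local Open Scope ring_scope.

(* Stacking the players' inputs, B := [B1 B2] and R := diag(R1, -R2), gives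
   N(P) = R + B^T (gamma P) B and L(P) = A^T (gamma P) B, as for a single player.
   The Riccati operator is then Q - P + A^T (gamma P - gamma P B N(P)^-1 B^T gamma P) A,
   whose middle factor is ((gamma P)^-1 + B R^-1 B^T)^-1 by the Woodbury identity,
   and B R^-1 B^T = B1 R1^-1 B1^T - B2 R2^-1 B2^T. *)

Section Woodbury.
Variables (R : comUnitRingType) (n m : nat).
Variables (P : 'M[R]_n) (U : 'M[R]_(n, m)) (V : 'M[R]_(m, n)) (C : 'M[R]_m).
Hypotheses (P_unit : P \in unitmx) (C_unit : C \in unitmx)
           (CVPU_unit : C + V *m P *m U \in unitmx).

Lemma woodbury_mulmx :
  (invmx P + U *m invmx C *m V) *m
    (P - P *m U *m invmx (C + V *m P *m U) *m V *m P) = 1%:M.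
Proof.
set X := invmx P + U *m invmx C *m V.
have XP : X *m P = 1%:M + U *m invmx C *m V *m P by rewrite mulmxDl mulVmx.
have XPU : X *m P *m U = U *m invmx C *m (C + V *m P *m U).
  by rewrite XP mulmxDl mul1mx mulmxDr -!mulmxA mulVmx // mulmx1.
rewrite mulmxBr !mulmxA XPU -[_ *m invmx (C + _)]mulmxA mulmxV // mulmx1.
by rewrite XP addrK.
Qed.

Lemma invmx_woodbury :
  invmx (invmx P + U *m invmx C *m V) =
    P - P *m U *m invmx (C + V *m P *m U) *m V *m P.
Proof.
have [X_unit _] := mulmx1_unit woodbury_mulmx.
by rewrite -[LHS]mulmx1 -woodbury_mulmx mulKmx.
Qed.

End Woodbury.

Section MatrixOpp.
Variables (R : comUnitRingType) (n : nat) (M : 'M[R]_n).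

Lemma unitmxN : (- M \in unitmx) = (M \in unitmx).
Proof. by rewrite -scaleN1r unitmxZ ?unitrN1. Qed.

Lemma invmxN : M \in unitmx -> invmx (- M) = - invmx M.
Proof.
by move=> M_unit; rewrite -[- M]scaleN1r invmxZ ?scaleN1r ?unitmxN // invrN1 scaleN1r.
Qed.

End MatrixOpp.

Section StackedPlayers.
Variables (R : realFieldType) (d : nat) (gamma : R).
Variables (A B1 B2 Q R1 R2 P : 'M[R]_d).
Hypothesis P_sym : P^T = P.

Definition Bcat : 'M[R]_(d, d + d) := row_mx B1 B2.
Definition Rdiag : 'M[R]_(d + d) := block_mx R1 0 0 (- R2).

Lemma Nop_stacked : Nop gamma B1 B2 R1 R2 P = Rdiag + Bcat^T *m (gamma *: P) *m Bcat.
Proof.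
rewrite /Nop /Rdiag /Bcat tr_row_mx mul_col_mx mul_col_row add_block_mx.
rewrite /N1op /N2op /L12op -!scalemxAr -!scalemxAl !add0r addrC [- R2 + _]addrC.
by congr block_mx; rewrite linearZ /= !trmx_mul trmxK P_sym mulmxA.
Qed.

Lemma Lop_stacked : Lop gamma A B1 B2 P = A^T *m (gamma *: P) *m Bcat.
Proof. by rewrite /Lop /Bcat mul_mx_row -!scalemxAr -!scalemxAl. Qed.

Lemma Ric_stacked :
  Ric gamma A B1 B2 Q R1 R2 P =
    Q - P + A^T *m (gamma *: P - gamma *: P *m Bcat
                      *m invmx (Nop gamma B1 B2 R1 R2 P) *m Bcat^T *m (gamma *: P)) *m A.
Proof.
rewrite /Ric /Mop Lop_stacked !trmx_mul trmxK [(gamma *: P)^T]linearZ /= P_sym.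
rewrite scalemxAl scalemxAr mulmxBr mulmxBl !mulmxA.
by rewrite addrA; congr (_ - _); rewrite -addrA addrC (addrC (- P)).
Qed.

Lemma Bcat_invmx_Rdiag : R1 \in unitmx -> R2 \in unitmx ->
  Bcat *m invmx Rdiag *m Bcat^T = B1 *m invmx R1 *m B1^T - B2 *m invmx R2 *m B2^T.
Proof.
move=> R1_unit R2_unit.
rewrite invmx_block_diag ?block_diag_mx_unit ?R1_unit ?unitmxN //.
rewrite /Bcat mul_row_block tr_row_mx mul_row_col !mulmx0 !addr0 !add0r.
by rewrite invmxN // mulmxN mulNmx.
Qed.

End StackedPlayers.

Theorem mainTheorem14 (R : realFieldType) (d : nat) (gamma : R)
  (A Abar B1 B1bar B2 B2bar Q R1 R1bar R2 R2bar Pc : 'M[R]_d) :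
  (0 < d)%N -> 0 < gamma < 1 ->
  Q^T = Q -> R1^T = R1 -> R1bar^T = R1bar -> R2^T = R2 -> R2bar^T = R2bar ->
  B1 \in unitmx -> B2 \in unitmx -> R1 \in unitmx -> R2 \in unitmx ->
  B1 + B1bar \in unitmx -> B2 + B2bar \in unitmx ->
  R1 + R1bar \in unitmx -> R2 + R2bar \in unitmx ->
  Pc^T = Pc ->
  Nop gamma B1 B2 R1 R2 Pc \in unitmx ->
  Ric gamma A B1 B2 Q R1 R2 Pc = 0 ->
  Pc \in unitmx ->
  invmx Pc + gamma *: (B1 *m invmx R1 *m B1^T) - gamma *: (B2 *m invmx R2 *m B2^T)
    \in unitmx ->
  Ric gamma A B1 B2 Q R1 R2 Pc =
    Q - Pc + A^T *m invmx (gamma^-1 *: invmx Pc + B1 *m invmx R1 *m B1^T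
                           - B2 *m invmx R2 *m B2^T) *m A.
Proof.
(* Only the symmetry of Pc and the invertibility of Pc, R1, R2 and N(Pc) are used:
   the identity holds off the Riccati equation too, and Woodbury supplies the
   inverse of the middle matrix. *)
move=> _ /andP[gamma_gt0 _] _ _ _ _ _ _ _ R1_unit R2_unit _ _ _ _ Pc_sym N_unit _ Pc_unit _.
have gPc_unit : gamma *: Pc \in unitmx by rewrite unitmxZ // unitfE gt_eqF.
have Rdiag_unit : Rdiag R1 R2 \in unitmx by rewrite block_diag_mx_unit R1_unit unitmxN.
rewrite Nop_stacked // in N_unit.
rewrite Ric_stacked // Nop_stacked // -invmx_woodbury //.
by rewrite invmxZ // Bcat_invmx_Rdiag // addrA.
Qed.
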